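(* Let $L$ be a sublattice of $A_n$ of rank $n$. The boundary of $\Sigma^c(L)$ in $\mathbb R^{n+1}$ equals the lower graph of $h_{\triangle,L}$: $$\partial\Sigma^c(L)=\{\,y-h_{\triangle,L}(y)(1,\dots,1): y\in H_0\,\}.$$
   Context: Let $n\ge 1$, $H_0=\{x\in\mathbb R^{n+1}:\sum_i x_i=0\}$ and $A_n=H_0\cap\mathbb Z^{n+1}$. Write $x\le y$ iff $x_i\le y_i$ for all $i$. Let $\Sigma^{\mathbb R}(L)=\{x\in\mathbb R^{n+1}: x\not\le q\text{ for all }q\in L\}$ and let $\Sigma^c(L)$ be its topological closure in $\mathbb R^{n+1}$. For $p,q\in H_0$ let $d_\triangle(p,q)=\max_i(p_i-q_i)$, and for $x\in H_0$ let $h_{\triangle,L}(x)=\min_{p\in L}d_\triangle(x,p)$. *)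

(* classical reals. Points of R^{n+1} are functions nat -> R,
   of which only the coordinates 0..n are used. *)
From Stdlib Require Import Reals ZArith ClassicalEpsilon.
Open Scope R_scope.

Fixpoint sumto (f : nat -> R) (m : nat) : R :=
  match m with O => f O | S k => sumto f k + f (S k) end.

Fixpoint maxto (f : nat -> R) (m : nat) : R :=
  match m with O => f O | S k => Rmax (maxto f k) (f (S k)) end.

Definition H0 (n : nat) (x : nat -> R) : Prop := sumto x n = 0.

(* the root lattice A_n = H_0 ∩ Z^{n+1}; integer vectors are nat -> Z,
   normalized to vanish outside the indices 0..n *)
Definition inA (n : nat) (p : nat -> Z) : Prop :=
  (forall i, (n < i)%nat -> p i = 0%Z) /\ sumto (fun i => IZR (p i)) n = 0.

Definition toR (p : nat -> Z) : nat -> R := fun i => IZR (p i).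

Definition sublattice (n : nat) (L : (nat -> Z) -> Prop) : Prop :=
  (forall p, L p -> inA n p) /\
  L (fun _ => 0%Z) /\
  (forall p q, L p -> L q -> L (fun i => (p i + q i)%Z)) /\
  (forall p, L p -> L (fun i => (- p i)%Z)).

Definition has_rank (n : nat) (r : nat) (L : (nat -> Z) -> Prop) : Prop :=
  exists v : nat -> nat -> Z,
    (forall k, (k < r)%nat -> L (v k)) /\
    (forall c : nat -> R,
        (forall i, (i <= n)%nat ->
           match r with O => 0 | S r' => sumto (fun k => c k * IZR (v k i)) r' end = 0) ->
        forall k, (k < r)%nat -> c k = 0).

Definition vle (n : nat) (x y : nat -> R) : Prop := forall i, (i <= n)%nat -> x i <= y i.

Definition SigmaR (n : nat) (L : (nat -> Z) -> Prop) (x : nat -> R) : Prop :=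
  forall q, L q -> ~ vle n x (toR q).

Definition near (n : nat) (eps : R) (x z : nat -> R) : Prop :=
  forall i, (i <= n)%nat -> Rabs (x i - z i) < eps.

Definition closure (n : nat) (S : (nat -> R) -> Prop) (x : nat -> R) : Prop :=
  forall eps, 0 < eps -> exists z, S z /\ near n eps x z.

Definition interior (n : nat) (S : (nat -> R) -> Prop) (x : nat -> R) : Prop :=
  exists eps, 0 < eps /\ forall z, near n eps x z -> S z.

Definition boundary (n : nat) (S : (nat -> R) -> Prop) (x : nat -> R) : Prop :=
  closure n S x /\ ~ interior n S x.

Definition Sigmac (n : nat) (L : (nat -> Z) -> Prop) : (nat -> R) -> Prop :=
  closure n (SigmaR n L).

Definition dtri (n : nat) (p q : nat -> R) : R := maxto (fun i => p i - q i) n.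

Definition is_min_dist (n : nat) (L : (nat -> Z) -> Prop) (x : nat -> R) (t : R) : Prop :=
  (exists p, L p /\ dtri n x (toR p) = t) /\
  (forall p, L p -> t <= dtri n x (toR p)).

Definition htri (n : nat) (L : (nat -> Z) -> Prop) (x : nat -> R) : R :=
  epsilon (inhabits 0) (fun t => is_min_dist n L x t).

(* Proof idea: [Sigma^R(L)] is exactly the set where [h_{triangle,L} > 0], since
   [x <= q] componentwise iff [d_triangle(x,q) <= 0].  The function [h] is
   1-Lipschitz for the sup-norm and commutes with translation along
   [(1,...,1)]: [h(x + c(1,...,1)) = h(x) + c].  Hence [Sigma^c(L)] is
   [{h >= 0}], its interior is [{h > 0}] and its boundary is the level set
   [{h = 0}], which translation along [(1,...,1)] identifies with the lower
   graph of [h] over [H_0].  The minimum defining [h] exists because the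
   [d_triangle(x,p)] are bounded below by the mean of [x] and each coordinate
   [x_i - p_i] ranges over the discrete set [x_i + Z]. *)

From Pilot Require Import Defs.
From Stdlib Require Import Reals ZArith.
From Stdlib Require Import Lra Lia Classical ClassicalEpsilon.
Open Scope R_scope.

Lemma maxto_ub f m i : (i <= m)%nat -> f i <= maxto f m.
Proof.
  induction m as [|k IH]; intros Hi; simpl.
  - replace i with 0%nat by lia; lra.
  - destruct (Nat.eq_dec i (S k)) as [->|Hne].
    + apply Rmax_r.
    + eapply Rle_trans; [apply IH; lia | apply Rmax_l].
Qed.

Lemma maxto_attained f m : exists i, (i <= m)%nat /\ maxto f m = f i.
Proof.
  induction m as [|k [i [Hi Ei]]]; simpl.
  - now exists 0%nat.
  - destruct (Rle_dec (maxto f k) (f (S k))).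
    + exists (S k); split; [lia | now apply Rmax_right].
    + exists i; split; [lia | rewrite Rmax_left; lra].
Qed.

Lemma maxto_lub f m c : (forall i, (i <= m)%nat -> f i <= c) -> maxto f m <= c.
Proof. intros H; destruct (maxto_attained f m) as [i [Hi ->]]; auto. Qed.

Lemma maxto_lub_lt f m c : (forall i, (i <= m)%nat -> f i < c) -> maxto f m < c.
Proof. intros H; destruct (maxto_attained f m) as [i [Hi ->]]; auto. Qed.

Lemma maxto_ext f g m :
  (forall i, (i <= m)%nat -> f i = g i) -> maxto f m = maxto g m.
Proof.
  intros H; apply Rle_antisym; apply maxto_lub; intros i Hi;
    [rewrite H by lia | rewrite <- H by lia]; now apply maxto_ub.
Qed.

Lemma maxto_add_const f m c : maxto (fun i => f i + c) m = maxto f m + c.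
Proof.
  apply Rle_antisym.
  - apply maxto_lub; intros i Hi; pose proof (maxto_ub f m i Hi); lra.
  - destruct (maxto_attained f m) as [i [Hi ->]].
    pose proof (maxto_ub (fun i => f i + c) m i Hi); simpl in *; lra.
Qed.

Lemma sumto_add_const f m c :
  sumto (fun i => f i + c) m = sumto f m + INR (S m) * c.
Proof.
  induction m as [|k IH]; simpl sumto.
  - simpl; lra.
  - rewrite IH, (S_INR (S k)); lra.
Qed.

Lemma sumto_sub f g m : sumto (fun i => f i - g i) m = sumto f m - sumto g m.
Proof. induction m as [|k IH]; simpl; [lra | rewrite IH; lra]. Qed.

Lemma sumto_le_maxto f m : sumto f m <= INR (S m) * maxto f m.
Proof.
  assert (H : forall k, (k <= m)%nat -> sumto f k <= INR (S k) * maxto f m).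
  { induction k as [|k IH]; intros Hk; simpl sumto.
    - simpl; pose proof (maxto_ub f m 0 ltac:(lia)); lra.
    - pose proof (IH ltac:(lia)); pose proof (maxto_ub f m (S k) Hk).
      rewrite (S_INR (S k)); lra. }
  apply H; lia.
Qed.

Lemma finite_pos_lower_bound (f : nat -> R) m :
  (forall i, (i <= m)%nat -> 0 < f i) ->
  exists d, 0 < d /\ forall i, (i <= m)%nat -> d <= f i.
Proof.
  induction m as [|k IH]; intros H.
  - exists (f 0%nat); split; [apply H; lia|].
    intros i Hi; replace i with 0%nat by lia; lra.
  - destruct IH as [d [Hd Hd']]; [intros; apply H; lia|].
    exists (Rmin d (f (S k))); split.
    + apply Rmin_pos; auto; apply H; lia.
    + intros i Hi; destruct (Nat.eq_dec i (S k)) as [->|].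
      * apply Rmin_r.
      * eapply Rle_trans; [apply Rmin_l | apply Hd'; lia].
Qed.

Lemma inf_approx (P : R -> Prop) b :
  (exists r, P r) -> (forall r, P r -> b <= r) ->
  exists h, (forall r, P r -> h <= r) /\
            forall d, 0 < d -> exists r, P r /\ r < h + d.
Proof.
  intros [r0 Hr0] Hb.
  destruct (completeness (fun s => P (- s))) as [m [Hub Hlub]].
  - exists (- b); intros s Hs; pose proof (Hb _ Hs); lra.
  - exists (- r0); now rewrite Ropp_involutive.
  - exists (- m); split.
    + intros r Hr; enough (- r <= m) by lra.
      apply Hub; now rewrite Ropp_involutive.
    + intros d Hd; apply NNPP; intros Hnone.
      enough (m <= m - d) by lra.
      apply Hlub; intros s Hs; apply Rnot_lt_le; intros Hlt.
      apply Hnone; exists (- s); split; [exact Hs | lra].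
Qed.

(* Among the reals [r + k], [k] an integer, the largest one [<= h] is followed
   by the next one at distance [r - h + up (h - r)] above [h]. *)
Lemma int_translate_gap r h (k : Z) :
  r + IZR k < h + (r - h + IZR (up (h - r))) -> r + IZR k <= h.
Proof.
  intros Hlt; destruct (archimed (h - r)) as [_ Hup].
  assert (Hlt_up : (k < up (h - r))%Z) by (apply lt_IZR; lra).
  assert (Hk : (k <= up (h - r) - 1)%Z) by lia.
  apply IZR_le in Hk; rewrite minus_IZR in Hk; lra.
Qed.

Lemma dtri_add_const n x c p : dtri n (fun i => x i + c) p = dtri n x p + c.
Proof. unfold dtri; rewrite <- maxto_add_const; apply maxto_ext; intros; lra. Qed.

Lemma dtri_ext n x x' p :
  (forall i, (i <= n)%nat -> x i = x' i) -> dtri n x p = dtri n x' p.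
Proof. intros H; apply maxto_ext; intros i Hi; now rewrite H. Qed.

Lemma dtri_le_0 n x q : dtri n x q <= 0 <-> vle n x q.
Proof.
  split.
  - intros H i Hi; pose proof (maxto_ub (fun i => x i - q i) n i Hi); 
    unfold dtri in H; simpl in *; lra.
  - intros H; apply maxto_lub; intros i Hi; pose proof (H i Hi); lra.
Qed.

Lemma near_sym n eps x z : near n eps x z -> near n eps z x.
Proof. intros H i Hi; rewrite Rabs_minus_sym; auto. Qed.

Lemma near_refl n eps x : 0 < eps -> near n eps x x.
Proof. intros Heps i _; unfold Rminus; rewrite Rplus_opp_r, Rabs_R0; auto. Qed.

Lemma near_add_const n eps x c : Rabs c < eps -> near n eps x (fun i => x i + c).
Proof.
  intros Hc i _; replace (x i - (x i + c)) with (- c) by ring.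
  now rewrite Rabs_Ropp.
Qed.

Lemma dtri_ge_mean n x p :
  inA n p -> sumto x n / INR (S n) <= dtri n x (toR p).
Proof.
  intros [_ Hsum].
  assert (Hpos : 0 < INR (S n)) by (apply lt_0_INR; lia).
  pose proof (sumto_le_maxto (fun i => x i - toR p i) n) as Hle.
  rewrite sumto_sub in Hle; unfold toR in Hle at 1; rewrite Hsum in Hle.
  apply (Rmult_le_reg_l (INR (S n))); [exact Hpos|].
  unfold dtri; field_simplify; lra.
Qed.

Section TriangleHeight.

Variable n : nat.
Variable L : (nat -> Z) -> Prop.
Hypothesis HL : sublattice n L.

Lemma min_dist_exists x : exists t, is_min_dist n L x t.
Proof.
  destruct HL as [HA [HL0 _]].
  destruct (inf_approx (fun r => exists p, L p /\ r = dtri n x (toR p))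
              (sumto x n / INR (S n))) as [h [Hinf Happrox]].
  - exists (dtri n x (toR (fun _ => 0%Z))); eauto.
  - intros r [p [Hp ->]]; now apply dtri_ge_mean, HA.
  - destruct (finite_pos_lower_bound
                (fun i => x i - h + IZR (up (h - x i))) n) as [d [Hd Hgap]].
    { intros i _; destruct (archimed (h - x i)); lra. }
    destruct (Happrox d Hd) as [r [[p [Hp ->]] Hlt]].
    exists h; split; [exists p; split; [exact Hp|] | intros q Hq; apply Hinf; eauto].
    apply Rle_antisym; [|apply Hinf; eauto].
    apply maxto_lub; intros i Hi.
    replace (x i - toR p i) with (x i + IZR (- p i)) by (unfold toR; rewrite opp_IZR; ring).
    apply int_translate_gap.
    pose proof (maxto_ub (fun i => x i - toR p i) n i Hi); pose proof (Hgap i Hi).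
    unfold toR in *; rewrite opp_IZR; unfold dtri in Hlt; simpl in *; lra.
Qed.

Lemma min_dist_unique x t1 t2 :
  is_min_dist n L x t1 -> is_min_dist n L x t2 -> t1 = t2.
Proof.
  intros [[p1 [H1 E1]] A1] [[p2 [H2 E2]] A2].
  specialize (A1 p2 H2); specialize (A2 p1 H1); lra.
Qed.

Lemma htri_spec x : is_min_dist n L x (htri n L x).
Proof. unfold htri; apply epsilon_spec, min_dist_exists. Qed.

Lemma htri_le x p : L p -> htri n L x <= dtri n x (toR p).
Proof. apply (proj2 (htri_spec x)). Qed.

Lemma htri_attained x : exists p, L p /\ dtri n x (toR p) = htri n L x.
Proof. apply (proj1 (htri_spec x)). Qed.

Lemma htri_add_const x c : htri n L (fun i => x i + c) = htri n L x + c.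
Proof.
  symmetry; apply (min_dist_unique (fun i => x i + c)); [|apply htri_spec].
  destruct (htri_spec x) as [[p [Hp E]] A]; split.
  - exists p; split; [exact Hp|]; rewrite dtri_add_const; lra.
  - intros q Hq; rewrite dtri_add_const; specialize (A q Hq); lra.
Qed.

Lemma htri_ext x x' :
  (forall i, (i <= n)%nat -> x i = x' i) -> htri n L x = htri n L x'.
Proof.
  intros H; apply (min_dist_unique x); [apply htri_spec|].
  destruct (htri_spec x') as [[p [Hp E]] A]; split.
  - exists p; rewrite (dtri_ext n x x'); auto.
  - intros q Hq; rewrite (dtri_ext n x x'); auto.
Qed.

Lemma htri_lt_near eps x z : near n eps x z -> htri n L x < htri n L z + eps.
Proof.
  intros Hnear; destruct (htri_attained z) as [p [Hp <-]].
  eapply Rle_lt_trans; [apply (htri_le x p Hp)|].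
  apply maxto_lub_lt; intros i Hi.
  pose proof (maxto_ub (fun i => z i - toR p i) n i Hi).
  destruct (Rabs_def2 _ _ (Hnear i Hi)); unfold dtri; simpl in *; lra.
Qed.

Lemma SigmaR_iff x : SigmaR n L x <-> 0 < htri n L x.
Proof.
  split.
  - intros H; destruct (htri_attained x) as [p [Hp <-]].
    apply Rnot_le_lt; intros Hle; now apply (H p Hp), dtri_le_0.
  - intros H q Hq Hle; apply dtri_le_0 in Hle; pose proof (htri_le x q Hq); lra.
Qed.

Lemma closure_htri_ge0 (S : (nat -> R) -> Prop) x :
  (forall z, S z -> 0 <= htri n L z) -> Defs.closure n S x -> 0 <= htri n L x.
Proof.
  intros HS Hx; apply Rnot_lt_le; intros Hneg.
  destruct (Hx (- htri n L x)) as [z [Hz Hnear]]; [lra|].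
  pose proof (HS z Hz); pose proof (htri_lt_near _ _ _ (near_sym _ _ _ _ Hnear)); lra.
Qed.

Lemma Sigmac_iff x : Sigmac n L x <-> 0 <= htri n L x.
Proof.
  split.
  - apply closure_htri_ge0; intros z Hz; apply Rlt_le, SigmaR_iff, Hz.
  - intros H eps Heps; exists (fun i => x i + eps / 2); split.
    + apply SigmaR_iff; rewrite htri_add_const; lra.
    + apply near_add_const; rewrite Rabs_right; lra.
Qed.

Lemma interior_Sigmac_iff x : Defs.interior n (Sigmac n L) x <-> 0 < htri n L x.
Proof.
  split.
  - intros [eps [Heps H]].
    enough (0 <= htri n L x - eps / 2) by lra.
    unfold Rminus; rewrite <- htri_add_const; apply Sigmac_iff, H, near_add_const.
    rewrite Rabs_left; lra.
  - intros H; exists (htri n L x); split; [exact H|].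
    intros z Hnear; apply Sigmac_iff; pose proof (htri_lt_near _ _ _ Hnear); lra.
Qed.

Lemma boundary_Sigmac_iff x : boundary n (Sigmac n L) x <-> htri n L x = 0.
Proof.
  unfold boundary; rewrite interior_Sigmac_iff.
  assert (Defs.closure n (Sigmac n L) x <-> 0 <= htri n L x).
  { split.
    - apply closure_htri_ge0; intros z; apply Sigmac_iff.
    - intros H eps Heps; exists x; split; [now apply Sigmac_iff | now apply near_refl]. }
  rewrite H; lra.
Qed.

Lemma htri_eq0_iff_lower_graph x :
  htri n L x = 0 <->
  exists y, H0 n y /\ forall i, (i <= n)%nat -> x i = y i - htri n L y.
Proof.
  assert (Hpos : 0 < INR (S n)) by (apply lt_0_INR; lia).
  split.
  - intros Hx; exists (fun i => x i + - (sumto x n / INR (S n))); split.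
    + unfold H0; rewrite sumto_add_const; field; lra.
    + intros i _; rewrite htri_add_const, Hx; ring.
  - intros [y [_ Hy]].
    rewrite (htri_ext x (fun i => y i + - htri n L y)), htri_add_const; [ring|].
    intros i Hi; rewrite Hy; [ring | exact Hi].
Qed.

End TriangleHeight.

Theorem mainTheorem10 (n : nat) (L : (nat -> Z) -> Prop) :
  (1 <= n)%nat ->
  sublattice n L ->
  has_rank n n L ->
  forall x : nat -> R,
    boundary n (Sigmac n L) x <->
    exists y : nat -> R, H0 n y /\
      forall i, (i <= n)%nat -> x i = y i - htri n L y.
Proof.
  intros _ HL _ x.
  rewrite boundary_Sigmac_iff by exact HL.
  now apply htri_eq0_iff_lower_graph.
Qed.
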